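(* Let $u,w$ be words over $\{L,R\}$ such that $w$ starts with $R$ and $Ru$ is a tail of $w$. Then $LRu$ is reduced from $Lw$.
   Context: Words are finite strings (including the empty word) over $\{L,R\}$. A tail of $w$ is any word $v'$ with $w=vv'$ for some word $v$. A word $u$ is reduced from $w$ if it is obtained from $w$ by finitely many (possibly zero) successive applications of the reduction rules, where $v,v'$ are arbitrary words: (1) $vRRv'\Rightarrow vRv'$; (1') $vLLv'\Rightarrow vLv'$; (2) $vLRv'\Rightarrow vv'$; (2') $vRLv'\Rightarrow vv'$. *)

From Stdlib Require Import List Relations.
Import ListNotations.

Inductive letter : Type := L | R.
Definition word := list letter.

Inductive step : word -> word -> Prop :=
| step_RR : forall v v' : word, step (v ++ [R; R] ++ v') (v ++ [R] ++ v')
| step_LL : forall v v' : word, step (v ++ [L; L] ++ v') (v ++ [L] ++ v')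
| step_LR : forall v v' : word, step (v ++ [L; R] ++ v') (v ++ v')
| step_RL : forall v v' : word, step (v ++ [R; L] ++ v') (v ++ v').

Definition reduced_from (u w : word) : Prop := clos_refl_trans word step w u.

Definition is_tail (t w : word) : Prop := exists v : word, w = v ++ t.

From Stdlib Require Import List Relations.
Import ListNotations.

(* The leading L swallows everything standing between it and the R that
   starts the tail: LL => L, LRL => L and LRR => LR shorten the word while
   keeping a prefix L or LR, so an induction on the intermediate word ends
   in LRu. *)

Lemma reduced_from_step (u w w' : word) :
  step w w' -> reduced_from u w' -> reduced_from u w.
Proof.
  intros Hstep Hred.
  exact (rt_trans _ _ _ _ _ (rt_step _ _ _ _ Hstep) Hred).
Qed.

Lemma reduced_from_L_app_R (x t : word) :
  reduced_from (L :: R :: t) (L :: x ++ R :: t).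
Proof.
  enough (H : reduced_from (L :: R :: t) (L :: x ++ R :: t) /\
              reduced_from (L :: R :: t) (L :: R :: x ++ R :: t)) by apply H.
  induction x as [|[|] x [IHx IHRx]]; simpl.
  - split; [apply rt_refl | apply rt_step, (step_RR [L] t)].
  - split.
    + exact (reduced_from_step _ _ _ (step_LL [] (x ++ R :: t)) IHx).
    + exact (reduced_from_step _ _ _ (step_RL [L] (x ++ R :: t)) IHx).
  - split.
    + exact IHRx.
    + exact (reduced_from_step _ _ _ (step_RR [L] (x ++ R :: t)) IHRx).
Qed.

Theorem mainTheorem7 (u w : word) :
  (exists w' : word, w = R :: w') ->
  is_tail (R :: u) w ->
  reduced_from (L :: R :: u) (L :: w).
Proof.
  intros _ [v ->].
  apply reduced_from_L_app_R.
Qed.
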